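(* Suppose $n$ is even, $n_t=n_c=n/2$, and $W$ is the output of pair-switching rerandomization (PSRR) with threshold $a>0$ and tuning parameter $\gamma\ge 0$, assumed to terminate almost surely. Then for every $w\in\{0,1\}^n$ with $\sum_iw_i=n/2$, $P(W=w)=P(W=\mathbf 1-w)$; consequently $P(W_i=1)=P(W_i=0)=1/2$ for every $i$.
   Context: Covariates $X_1,\dots,X_n\in\mathbb R^p$ are fixed, with sample covariance matrix $S_{XX}=(n-1)^{-1}\sum_i(X_i-\overline X)(X_i-\overline X)^{\mathrm T}$ invertible, $\overline X=n^{-1}\sum_iX_i$. For an assignment $W\in\{0,1\}^n$ with $n_t$ ones, the Mahalanobis distance is $M(W)=n_t(1-n_t/n)(\overline X_t-\overline X_c)^{\mathrm T}S_{XX}^{-1}(\overline X_t-\overline X_c)$ with $\overline X_t=n_t^{-1}\sum_{i:W_i=1}X_i$, $\overline X_c=n_c^{-1}\sum_{i:W_i=0}X_i$. PSRR: draw $W^{(0)}$ uniformly among assignments with $n_t$ ones; set $t=0$, $M^{(0)}=M(W^{(0)})$. While $M^{(t)}>a$: choose uniformly at random one index $i$ with $W^{(t)}_i=1$ and one index $j$ with $W^{(t)}_j=0$, let $W^*$ be $W^{(t)}$ with entries $i,j$ swapped, $M^*=M(W^* )$; with probability $\min\{(M^{(t)}/M^* )^\gamma,1\}$ set $W^{(t+1)}=W^*$, $M^{(t+1)}=M^*$, $t\leftarrow t+1$ (otherwise keep the current state and try again). Output $W=W^{(t)}$ once $M^{(t)}\le a$. *)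

From HB Require Import structures.
From mathcomp Require Import all_boot all_order all_algebra.
From mathcomp Require Import all_classical all_reals all_analysis.
Set Implicit Arguments. Unset Strict Implicit. Unset Printing Implicit Defensive.
Import Order.TTheory GRing.Theory Num.Theory.
Import numFieldNormedType.Exports.
Local Open Scope ring_scope.

Section PSRR.
Context {R : realType} {n p : nat}.

(* An assignment W in {0,1}^n; W i = true means unit i is treated. *)
Definition assignment := {ffun 'I_n -> bool}.

Definition ntreated (w : assignment) : nat := #|[set i | w i]|.

Definition Xmean (X : 'M[R]_(n, p)) : 'rV[R]_p :=
  (n%:R)^-1 *: \sum_(i < n) row i X.

Definition Sxx (X : 'M[R]_(n, p)) : 'M[R]_p :=
  (n%:R - 1)^-1 *: \sum_(i < n) ((row i X - Xmean X)^T *m (row i X - Xmean X)).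

Definition Xbar_t (X : 'M[R]_(n, p)) (w : assignment) : 'rV[R]_p :=
  ((ntreated w)%:R)^-1 *: \sum_(i < n | w i) row i X.

Definition Xbar_c (X : 'M[R]_(n, p)) (w : assignment) : 'rV[R]_p :=
  ((n - ntreated w)%:R)^-1 *: \sum_(i < n | ~~ w i) row i X.

Definition mahal (X : 'M[R]_(n, p)) (w : assignment) : R :=
  let nt := (ntreated w)%:R in
  let d := Xbar_t X w - Xbar_c X w in
  nt * (1 - nt / n%:R) * (d *m invmx (Sxx X) *m d^T) 0 0.

Definition swap (w : assignment) (i j : 'I_n) : assignment :=
  [ffun k => if k == i then w j else if k == j then w i else w k].

(* acceptance probability min{(M/Mstar)^gamma, 1}; equals 1 when Mstar <= M
   (this also covers Mstar = 0, where the ratio is +infinity) *)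
Definition accept (gamma Mcur Mstar : R) : R :=
  if Mstar <= Mcur then 1 else powR (Mcur / Mstar) gamma.

(* One proposal/acceptance step of PSRR from state x (an "attempt"):
   choose i uniformly among treated, j uniformly among controls,
   move to swap x i j w.p. accept, otherwise stay at x. *)
Definition step_kernel (X : 'M[R]_(n, p)) (gamma : R) (nt : nat)
    (x y : assignment) : R :=
  let q := ((nt * (n - nt))%:R)^-1 in
  let P i j := q * accept gamma (mahal X x) (mahal X (swap x i j)) in
  \sum_(i < n | x i) \sum_(j < n | ~~ x j)
      (if swap x i j == y then P i j else 0)
  + (if x == y then 1 - \sum_(i < n | x i) \sum_(j < n | ~~ x j) P i j else 0).

Definition init_dist (nt : nat) (w : assignment) : R :=
  if ntreated w == nt then ('C(n, nt)%:R)^-1 else 0.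

(* sub-probability of being at state w after t attempts without having
   stopped before (the loop continues only while M > a) *)
Fixpoint alive_dist (X : 'M[R]_(n, p)) (gamma a : R) (nt : nat) (t : nat)
    (w : assignment) : R :=
  match t with
  | 0 => init_dist nt w
  | t'.+1 => \sum_(x : assignment | a < mahal X x)
               alive_dist X gamma a nt t' x * step_kernel X gamma nt x w
  end.

(* probability that the chain is still running after t attempts, P(T > t) *)
Definition running_prob (X : 'M[R]_(n, p)) (gamma a : R) (nt : nat) (t : nat) : R :=
  \sum_(x : assignment | a < mahal X x) alive_dist X gamma a nt t x.

(* P(W = w): probability that the output of PSRR equals w
   (the chain stops, for the first time, at w) *)
Definition psrr_prob (X : 'M[R]_(n, p)) (gamma a : R) (nt : nat)
    (w : assignment) : R :=
  if mahal X w <= a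
  then limn ((fun N : nat => \sum_(t < N) alive_dist X gamma a nt t w) : R^nat)
  else 0.

End PSRR.

From HB Require Import structures.
From mathcomp Require Import all_boot all_order all_algebra.
From mathcomp Require Import all_classical all_reals all_analysis.
From mathcomp Require Import perm zify ring lra.
Import Order.TTheory GRing.Theory Num.Theory.
Import numFieldNormedType.Exports.
Local Open Scope classical_set_scope.
Local Open Scope ring_scope.

Set Implicit Arguments.
Unset Strict Implicit.
Unset Printing Implicit Defensive.

(* Complementing an assignment, w |-> 1 - w, exchanges treated and control
   means, so it leaves the Mahalanobis distance unchanged; it commutes with
   pair switches; and when n_t = n/2 it fixes the uniform initial law. Hence
   every step of the PSRR chain, and therefore its output law, is invariant
   under complementation. If the chain terminates almost surely the output
   law has total mass 1, and complementation maps {w | w_i = 1} bijectively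
   onto {w | w_i = 0}, so each of these events has probability 1/2. *)

Section Complement.
Variable n : nat.
Implicit Types (w x : @assignment n) (i j : 'I_n).

Definition compl_assign w : @assignment n := [ffun i => ~~ w i].

Lemma compl_assignK : involutive compl_assign.
Proof. by move=> w; apply/ffunP => i; rewrite !ffunE negbK. Qed.

Lemma compl_assign_inj : injective compl_assign.
Proof. exact: inv_inj compl_assignK. Qed.

Lemma ntreated_le w : (ntreated w <= n)%N.
Proof. by rewrite /ntreated -[n in (_ <= n)%N]card_ord max_card. Qed.

Lemma ntreated_compl w : ntreated (compl_assign w) = (n - ntreated w)%N.
Proof.
rewrite /ntreated.
have -> : ([set i | compl_assign w i] = ~: [set i | w i])%SET.
  by apply/setP => i; rewrite !inE ffunE.
by have := cardsC [set i | w i]%SET; rewrite card_ord; lia.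
Qed.

Lemma ntreated_swap x i j : ntreated (swap x i j) = ntreated x.
Proof.
rewrite /ntreated.
have -> : ([set k | swap x i j k] = tperm i j @^-1: [set k | x k])%SET.
  by apply/setP => k; rewrite !inE ffunE permE /=; case: eqP => //; case: eqP.
by rewrite card_preimset //; exact: perm_inj.
Qed.

Lemma swapC x i j : swap x i j = swap x j i.
Proof.
apply/ffunP => k; rewrite !ffunE.
by case: (eqVneq k i) => [->|ki]; case: (eqVneq i j) => [->|ij] //;
  rewrite ?eqxx ?(negbTE ij).
Qed.

Lemma compl_swap x i j :
  compl_assign (swap x i j) = swap (compl_assign x) i j.
Proof. by apply/ffunP => k; rewrite !ffunE; case: ifP => _ //; case: ifP. Qed.

End Complement.

Section Mahalanobis.
Variables (R : realType) (n p : nat) (X : 'M[R]_(n, p)).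

Lemma Xbar_t_compl w : Xbar_t X (compl_assign w) = Xbar_c X w.
Proof.
rewrite /Xbar_t /Xbar_c ntreated_compl; congr (_ *: _).
by apply: eq_bigl => i; rewrite ffunE.
Qed.

Lemma Xbar_c_compl w : Xbar_c X (compl_assign w) = Xbar_t X w.
Proof.
rewrite /Xbar_t /Xbar_c ntreated_compl subKn ?ntreated_le //; congr (_ *: _).
by apply: eq_bigl => i; rewrite ffunE negbK.
Qed.

Lemma mahal_compl w : mahal X (compl_assign w) = mahal X w.
Proof.
rewrite /mahal Xbar_t_compl Xbar_c_compl ntreated_compl.
rewrite -(opprB (Xbar_t X w)) linearN /= !mulNmx mulmxN opprK; congr (_ * _).
rewrite natrB ?ntreated_le //.
have [n0|n_gt0] := posnP n.
  have -> : ntreated w = 0%N by have := ntreated_le w; lia.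
  by rewrite n0 subrr !mul0r.
have n_neq0 : (n%:R : R) != 0 by rewrite pnatr_eq0 -lt0n.
by field.
Qed.

End Mahalanobis.

Section Chain.
Variables (R : realType) (n p : nat) (X : 'M[R]_(n, p)) (gamma a : R).
Variable nt : nat.
Implicit Types (w x y z : @assignment n).

Definition proposal_sum x (F : @assignment n -> R) : R :=
  \sum_(i < n | x i) \sum_(j < n | ~~ x j) F (swap x i j).

Lemma eq_proposal_sum x F G : F =1 G -> proposal_sum x F = proposal_sum x G.
Proof. by move=> eFG; apply: eq_bigr => i _; apply: eq_bigr => j _. Qed.

Lemma ler_proposal_sum x F G :
  (forall z, F z <= G z) -> proposal_sum x F <= proposal_sum x G.
Proof. by move=> leFG; apply: ler_sum => i _; apply: ler_sum => j _. Qed.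

Lemma proposal_sum_ge0 x F : (forall z, 0 <= F z) -> 0 <= proposal_sum x F.
Proof. by move=> F_ge0; apply: sumr_ge0 => i _; apply: sumr_ge0 => j _. Qed.

Lemma proposal_sum_const x c :
  proposal_sum x (fun=> c) = c *+ (ntreated x * (n - ntreated x)).
Proof.
rewrite /proposal_sum -ntreated_compl mulnC mulrnA /ntreated -!sumr_const.
apply: eq_big => [i|i _]; first by rewrite inE.
by apply: eq_bigl => j; rewrite !inE ffunE.
Qed.

Let move_prob x z : R :=
  ((nt * (n - nt))%:R)^-1 * accept gamma (mahal X x) (mahal X z).

Lemma step_kernelE x y :
  step_kernel X gamma nt x y =
  proposal_sum x (fun z => if z == y then move_prob x z else 0)
  + (if x == y then 1 - proposal_sum x (move_prob x) else 0).
Proof. by []. Qed.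

Lemma proposal_sum_compl x F :
  proposal_sum (compl_assign x) F = proposal_sum x (F \o @compl_assign n).
Proof.
transitivity (\sum_(i < n | ~~ x i) \sum_(j < n | x j)
                F (compl_assign (swap x i j))).
  apply: eq_big => [i|i _]; first by rewrite ffunE.
  by apply: eq_big => [j|j _]; rewrite ?ffunE ?negbK // compl_swap.
rewrite exchange_big /=.
by apply: eq_bigr => i _; apply: eq_bigr => j _; rewrite swapC.
Qed.

Lemma step_kernel_compl x y :
  step_kernel X gamma nt (compl_assign x) (compl_assign y)
  = step_kernel X gamma nt x y.
Proof.
have move_prob_compl z :
    move_prob (compl_assign x) (compl_assign z) = move_prob x z.
  by rewrite /move_prob !mahal_compl.
rewrite (step_kernelE x y) (step_kernelE (compl_assign x) (compl_assign y)).
rewrite !proposal_sum_compl (inj_eq (@compl_assign_inj n)).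
apply: f_equal2.
  apply: eq_proposal_sum => z /=.
  by rewrite (inj_eq (@compl_assign_inj n)) move_prob_compl.
case: eqP => [_|_]; last by [].
(* [congr] would try to close this goal by unfolding [mahal]. *)
apply: (congr1 (fun s => 1 - s)).
exact: eq_proposal_sum.
Qed.

Lemma step_kernel_sum1 x : \sum_y step_kernel X gamma nt x y = 1.
Proof.
under eq_bigr => y _ do rewrite step_kernelE.
rewrite big_split /=.
have -> : \sum_y (if x == y then 1 - proposal_sum x (move_prob x) else 0)
          = 1 - proposal_sum x (move_prob x).
  by rewrite -big_mkcond (big_pred1 x) // => y; exact: eq_sym.
suff -> : \sum_y proposal_sum x (fun z => if z == y then move_prob x z else 0)
          = proposal_sum x (move_prob x) by rewrite addrC subrK.
rewrite /proposal_sum exchange_big /=; apply: eq_bigr => i _.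
rewrite exchange_big /=; apply: eq_bigr => j _.
by rewrite -big_mkcond (big_pred1 (swap x i j)).
Qed.

Lemma step_kernel_outside x y :
  ntreated x = nt -> ntreated y != nt -> step_kernel X gamma nt x y = 0.
Proof.
move=> x_nt y_nt; rewrite step_kernelE.
have /negbTE -> : x != y by apply: contra y_nt => /eqP <-; rewrite x_nt.
rewrite addr0; apply: big1 => i _; apply: big1 => j _.
by have /negbTE -> : swap x i j != y
  by apply: contra y_nt => /eqP <-; rewrite ntreated_swap x_nt.
Qed.

Lemma alive_dist_outside t w :
  ntreated w != nt -> alive_dist X gamma a nt t w = 0.
Proof.
elim: t w => [|t IH] w w_nt /=; first by rewrite /init_dist (negbTE w_nt).
apply: big1 => x _; have [x_nt|x_nt] := eqVneq (ntreated x) nt.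
  by rewrite step_kernel_outside ?mulr0.
by rewrite IH ?mul0r.
Qed.

Lemma init_dist_compl w :
  (n - nt)%N = nt -> init_dist nt (compl_assign w) = init_dist nt w :> R.
Proof.
move=> balanced; rewrite /init_dist ntreated_compl.
suff -> : (n - ntreated w == nt)%N = (ntreated w == nt) by [].
by apply/eqP/eqP; have := ntreated_le w; lia.
Qed.

Lemma alive_dist_compl t w : (n - nt)%N = nt ->
  alive_dist X gamma a nt t (compl_assign w) = alive_dist X gamma a nt t w.
Proof.
move=> balanced; elim: t w => [|t IH] w /=; first exact: init_dist_compl.
rewrite (reindex_inj (@compl_assign_inj n)) /=.
apply: eq_big => [x|x _]; first by rewrite mahal_compl.
by rewrite IH step_kernel_compl.
Qed.

Lemma psrr_prob_compl w : (n - nt)%N = nt ->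
  psrr_prob X gamma a nt (compl_assign w) = psrr_prob X gamma a nt w.
Proof.
move=> balanced; rewrite /psrr_prob mahal_compl; case: ifP => // _.
by congr (limn _); apply/funext => N; apply: eq_bigr => t _; exact: alive_dist_compl.
Qed.

Hypothesis gamma_ge0 : 0 <= gamma.

Lemma accept_ge0_le1 (Mcur Mstar : R) :
  0 < Mcur -> 0 <= accept gamma Mcur Mstar <= 1.
Proof.
rewrite /accept => Mcur_gt0; case: ifPn => [_|]; first by rewrite ler01 lexx.
rewrite -ltNge powR_ge0 /= => lt_cur_star.
have Mstar_gt0 : 0 < Mstar by exact: lt_trans lt_cur_star.
have ratio01 : 0 < Mcur / Mstar <= 1.
  by rewrite divr_gt0 //= ler_pdivrMr // mul1r ltW.
by rewrite -[leRHS](powRr0 (Mcur / Mstar)) ger_powR.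
Qed.

Lemma step_kernel_ge0 x y :
  ntreated x = nt -> 0 < mahal X x -> 0 <= step_kernel X gamma nt x y.
Proof.
move=> x_nt Mx_gt0; rewrite step_kernelE.
pose q : R := ((nt * (n - nt))%:R)^-1.
have move01 z : 0 <= move_prob x z <= q.
  have /andP[acc0 acc1] := accept_ge0_le1 (mahal X z) Mx_gt0.
  by rewrite mulr_ge0 ?invr_ge0 ?ler0n //= ler_piMr ?invr_ge0 ?ler0n.
apply: addr_ge0.
  apply: proposal_sum_ge0 => z; case: ifP => _ //.
  by case/andP: (move01 z).
case: ifP => _ //; rewrite subr_ge0.
have : proposal_sum x (move_prob x) <= proposal_sum x (fun=> q).
  by apply: ler_proposal_sum => z; case/andP: (move01 z).
move/le_trans; apply; rewrite proposal_sum_const x_nt /q.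
have [->|nt_pos] := posnP (nt * (n - nt)); first by rewrite mulr0n ler01.
by rewrite -(mulr_natr ((nt * (n - nt))%:R^-1)) mulVf // pnatr_eq0 -lt0n.
Qed.

Hypothesis a_gt0 : 0 < a.

Lemma alive_dist_ge0 t w : 0 <= alive_dist X gamma a nt t w.
Proof.
elim: t w => [|t IH] w /=; first by rewrite /init_dist; case: ifP.
apply: sumr_ge0 => x a_lt_Mx; have [x_nt|x_nt] := eqVneq (ntreated x) nt.
  by rewrite mulr_ge0 ?step_kernel_ge0 //; exact: lt_trans a_lt_Mx.
by rewrite alive_dist_outside ?mul0r.
Qed.

Definition alive_mass t : R := \sum_w alive_dist X gamma a nt t w.

Lemma alive_mass_succ t : alive_mass t.+1 = running_prob X gamma a nt t.
Proof.
rewrite /alive_mass /= exchange_big /=; apply: eq_bigr => x _.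
by rewrite -mulr_sumr step_kernel_sum1 mulr1.
Qed.

Lemma alive_mass_split t :
  alive_mass t
  = \sum_(w | mahal X w <= a) alive_dist X gamma a nt t w + alive_mass t.+1.
Proof.
rewrite alive_mass_succ /alive_mass (bigID (fun w => mahal X w <= a)) /=.
by congr (_ + _); apply: eq_bigl => w; rewrite -ltNge.
Qed.

Lemma alive_mass0 : (nt <= n)%N -> alive_mass 0 = 1.
Proof.
move=> nt_le_n; rewrite /alive_mass /= /init_dist -big_mkcond /=.
pose indicator (A : {set 'I_n}) : @assignment n := [ffun i => i \in A].
have indicator_bij : bijective indicator.
  exists (fun w : @assignment n => [set i | w i]%SET) => [A|w].
    by apply/setP => i; rewrite inE ffunE.
  by apply/ffunP => i; rewrite ffunE inE.
rewrite (reindex indicator) /=; last exact: onW_bij.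
have ntreated_indicator A : ntreated (indicator A) = #|A|.
  by apply: eq_card => i; rewrite inE ffunE.
rewrite (eq_bigl (fun A => A \in [set A : {set 'I_n} | #|A| == nt]%SET)); last first.
  by move=> A; rewrite inE ntreated_indicator.
rewrite sumr_const card_draws card_ord -(mulr_natr ('C(n, nt)%:R^-1)).
by rewrite mulVf // pnatr_eq0 -lt0n bin_gt0.
Qed.

Definition psrr_partial w : R^nat :=
  fun N => \sum_(t < N) alive_dist X gamma a nt t w.

Lemma sum_psrr_partial N : (nt <= n)%N ->
  \sum_(w | mahal X w <= a) psrr_partial w N = 1 - alive_mass N.
Proof.
move=> nt_le_n; elim: N => [|N IH].
  by rewrite big1 ?alive_mass0 ?subrr // => w _; rewrite /psrr_partial big_ord0.
under eq_bigr => w _ do rewrite /psrr_partial big_ord_recr /=.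
rewrite big_split /= IH (alive_mass_split N); ring.
Qed.

Lemma psrr_partial_nondecreasing w : nondecreasing_seq (psrr_partial w).
Proof.
apply/nondecreasing_seqP => N.
by rewrite /psrr_partial big_ord_recr /= lerDl alive_dist_ge0.
Qed.

Lemma psrr_partial_le1 w N : (nt <= n)%N -> mahal X w <= a ->
  psrr_partial w N <= 1.
Proof.
move=> nt_le_n stopped_w.
have : psrr_partial w N <= \sum_(w' | mahal X w' <= a) psrr_partial w' N.
  rewrite (bigD1 w) //= lerDl.
  by apply: sumr_ge0 => w' _; apply: sumr_ge0 => t _; exact: alive_dist_ge0.
move/le_trans; apply; rewrite sum_psrr_partial // gerBl.
by apply: sumr_ge0 => w' _; exact: alive_dist_ge0.
Qed.

Lemma psrr_partial_cvg w : (nt <= n)%N -> mahal X w <= a ->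
  cvgn (psrr_partial w).
Proof.
move=> nt_le_n stopped_w.
apply: nondecreasing_is_cvgn; first exact: psrr_partial_nondecreasing.
by exists 1 => _ [N _ <-]; exact: psrr_partial_le1.
Qed.

Lemma alive_mass_cvg0 :
  running_prob X gamma a nt t @[t --> \oo] --> 0 ->
  alive_mass N @[N --> \oo] --> 0.
Proof.
move=> running_cvg0; rewrite -cvg_shiftS.
by under eq_fun => N do rewrite /= alive_mass_succ.
Qed.

Lemma psrr_prob_sum1 : (nt <= n)%N ->
  running_prob X gamma a nt t @[t --> \oo] --> 0 ->
  \sum_w psrr_prob X gamma a nt w = 1.
Proof.
move=> nt_le_n /alive_mass_cvg0 alive_cvg0.
have sum_partial_cvg :
    \sum_(w | mahal X w <= a) psrr_partial w N @[N --> \oo]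
    --> \sum_(w | mahal X w <= a) limn (psrr_partial w).
  apply: cvg_big => [|w]; first exact: add_continuous.
  exact: psrr_partial_cvg.
have sum_partial_cvg1 :
    \sum_(w | mahal X w <= a) psrr_partial w N @[N --> \oo] --> (1 : R).
  under eq_fun => N do rewrite sum_psrr_partial //.
  by have := cvgB (cvg_cst (1 : R)) alive_cvg0; rewrite subr0; apply.
rewrite (bigID (fun w => mahal X w <= a)) /= [X in _ + X]big1 => [|w]; last first.
  by rewrite /psrr_prob => /negbTE ->.
rewrite addr0 -(cvg_unique (@Rhausdorff R) sum_partial_cvg sum_partial_cvg1).
by apply: eq_bigr => w stopped_w; rewrite /psrr_prob stopped_w.
Qed.

End Chain.

Lemma sum_compl_invariant_half (R : realFieldType) n
    (P : @assignment n -> R) (i : 'I_n) :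
  (forall w, P (compl_assign w) = P w) -> \sum_w P w = 1 ->
  \sum_(w : @assignment n | w i) P w = 1 / 2
  /\ \sum_(w : @assignment n | ~~ w i) P w = 1 / 2.
Proof.
move=> P_compl P_sum1.
have halves_eq :
    \sum_(w : @assignment n | w i) P w = \sum_(w : @assignment n | ~~ w i) P w.
  rewrite [RHS](reindex_inj (@compl_assign_inj n)) /=.
  by apply: eq_big => [w|w _]; rewrite ?ffunE ?negbK ?P_compl.
move: P_sum1; rewrite (bigID (fun w : @assignment n => w i)) /= halves_eq.
by split; lra.
Qed.

Theorem mainTheorem3 (R : realType) (n p : nat) (X : 'M[R]_(n, p))
    (a gamma : R) :
  ~~ odd n ->
  Sxx X \in unitmx ->
  0 < a -> 0 <= gamma ->
  running_prob X gamma a n./2 t @[t --> \oo] --> 0 ->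
  (forall w : @assignment n, ntreated w = n./2 ->
     psrr_prob X gamma a n./2 w
     = psrr_prob X gamma a n./2 [ffun i => ~~ w i])
  /\
  (forall i : 'I_n,
     \sum_(w : @assignment n | w i) psrr_prob X gamma a n./2 w = 1 / 2
     /\ \sum_(w : @assignment n | ~~ w i) psrr_prob X gamma a n./2 w = 1 / 2).
Proof.
move=> even_n _ a_gt0 gamma_ge0 running_cvg0.
have n_double : n = (n./2 + n./2)%N.
  by rewrite addnn -[LHS]odd_double_half (negbTE even_n).
have balanced : (n - n./2)%N = n./2 by lia.
have psrr_compl w := psrr_prob_compl X gamma a w balanced.
split => [w _ | i]; first by rewrite psrr_compl.
apply: sum_compl_invariant_half => //.
apply: psrr_prob_sum1 => //; lia.
Qed.
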